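(* Let $\mu$ be a probability measure on $\mathbb R$ with bounded support and let $b=\sup\operatorname{supp}\mu$. Then the map $\Phi:(b,\infty)\to\mathbb R$, $\Phi(x)=\dfrac{G_\mu(x)^2}{G_\mu'(x)}$, is continuous, nonincreasing, and takes values in $[-1,0]$.
   Context: $G_\mu(z)=\int\frac{1}{z-t}\,d\mu(t)$ is the Cauchy transform of $\mu$ for $z\notin\operatorname{supp}\mu$, and $G_\mu'$ denotes its derivative. *)

From HB Require Import structures.
From mathcomp Require Import all_boot all_order all_algebra.
From mathcomp Require Import all_classical all_reals all_analysis.
Set Implicit Arguments. Unset Strict Implicit. Unset Printing Implicit Defensive.
Import Order.TTheory GRing.Theory Num.Theory.
Import numFieldNormedType.Exports.
Local Open Scope classical_set_scope.
Local Open Scope ring_scope.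

(* Support of a measure on R: points all of whose (open ball) neighbourhoods
   have positive measure (the smallest closed set of full measure). *)
Definition msupport (R : realType) (mu : {measure set R -> \bar R}) : set R :=
  [set x | forall e : R, 0 < e -> (0 < mu (ball x e))%E].

Definition cauchy_transform (R : realType) (mu : {measure set R -> \bar R})
  (x : R) : R :=
  (\int[mu]_(t in setT) (x - t)^-1)%R.

From HB Require Import structures.
From mathcomp Require Import all_boot all_order all_algebra.
From mathcomp Require Import all_classical all_reals all_analysis.
From mathcomp Require Import measurable_realfun lebesgue_integral_under.
From mathcomp.algebra_tactics Require Import ring lra.
Import Order.TTheory GRing.Theory Num.Theory.
Import numFieldNormedType.Exports.
Local Open Scope classical_set_scope.
Local Open Scope ring_scope.

(* On (b, +oo) the Cauchy transform is the first of the moments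
   m_k(x) = \int (x - t)^-k dmu(t), and differentiation under the integral
   gives m_k' = - k m_(k+1).  Hence Phi = - m_1^2 / m_2 and
   Phi' = 2 m_1 (m_2^2 - m_1 m_3) / m_2^2.  Both the bound Phi >= -1
   (m_1^2 <= m_0 m_2 = m_2) and the sign of Phi' (m_2^2 <= m_1 m_3) are
   instances of the log-convexity m_(k+1)^2 <= m_k m_(k+2), which is the
   Cauchy-Schwarz inequality for the weight (x - t)^-k.  Bounded support
   confines mu to an interval [-M, b] on which all these kernels are bounded. *)

Lemma exists_Snat_inv_lt_lt {R : realType} (d : R) : 0 < d ->
  exists n : nat, n.+1%:R^-1 < d < n.+1%:R.
Proof.
move=> d0; exists (Num.truncn (d + d^-1)).
have dN := truncnS_gt (d + d^-1).
have d'0 : 0 <= d^-1 by rewrite invr_ge0 ltW.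
apply/andP; split.
  by rewrite -invf_plt ?posrE ?ltr0n //; apply: le_lt_trans dN; rewrite lerDr (ltW d0).
by apply: le_lt_trans dN; rewrite lerDl.
Qed.

Section msupport.
Context (R : realType) (mu : {measure set R -> \bar R}).

Lemma measure_itv_oc0 (p q : R) : q <= p -> mu `]p, q]%classic = 0%E.
Proof. by move=> qp; rewrite set_itv_ge ?measure0 // bnd_simp -leNgt. Qed.

Lemma measure_oc_gt0_msupport (p q : R) : (0 < mu `]p, q]%classic)%E ->
  exists2 c, p <= c <= q & msupport mu c.
Proof.
move=> mpq; have pq : p <= q.
  by rewrite leNgt; apply: contraTN mpq => /ltW/measure_itv_oc0 ->; rewrite ltxx.
pose T := [set y | p <= y <= q /\ (0 < mu `]y, q]%classic)%E].
have Tp : T p by rewrite /T /= lexx pq.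
have hsT : has_sup T by split; [exists p | exists q => y [/andP[]]].
set c := sup T.
have pc : p <= c by exact: sup_upper_bound.
have cq : c <= q by apply: ge_sup; [exists p | move=> y [/andP[]]].
exists c; first by rewrite pc cq.
move=> e e0; have [y [_ Ty] cy] := sup_adherent e0 hsT.
set z := c + e / 2.
have cz : c < z by rewrite ltrDl divr_gt0.
have null_zq : mu `]z, q]%classic = 0%E.
  have [zq|qz] := leP z q; last exact/measure_itv_oc0/ltW.
  apply/eqP; rewrite -measure_le0 leNgt; apply/negP => pos.
  have /(sup_upper_bound hsT) : T z by rewrite /T /= zq (le_trans pc (ltW cz)).
  by rewrite leNgt cz.
apply: (lt_le_trans Ty).
apply: (@le_trans _ _ (mu (`]y, z]%classic `|` `]z, q]%classic))).
  apply: le_measure; rewrite ?inE //; first exact: measurableU.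
  move=> t /=; rewrite in_itv /= => /andP[yt tq].
  by case: (leP t z) => tz; [left|right]; rewrite /= in_itv /= ?yt ?tz ?tq.
apply: le_trans (measureU2 _ _ _) _ => //=; rewrite null_zq adde0.
rewrite ball_itv; apply: le_measure; rewrite ?inE //.
move=> t /=; rewrite !in_itv /= => /andP[yt tz].
rewrite (lt_trans cy yt) /= (le_lt_trans tz) // ltrD2l.
by rewrite ltr_pdivrMr // ltr_pMr // ltr1n.
Qed.

Lemma msupport_null_compl_itv (a b : R) :
  (forall c, msupport mu c -> a <= c <= b) -> mu (~` `[a, b]%classic) = 0%E.
Proof.
move=> supp_ab.
have null_oc p q : (forall c, p <= c <= q -> ~ msupport mu c) ->
    mu `]p, q]%classic = 0%E.
  move=> nsupp; apply/eqP; rewrite -measure_le0 leNgt; apply/negP.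
  by move/measure_oc_gt0_msupport => [c /nsupp].
pose F n := `]a - n.+1%:R, a - n.+1%:R^-1]%classic `|`
            `]b + n.+1%:R^-1, b + n.+1%:R]%classic.
have inv_gt0 n : 0 < n.+1%:R^-1 :> R by rewrite invr_gt0 ltr0n.
have nF n : mu.-negligible (F n).
  move: (inv_gt0 n); rewrite /F; set r := n.+1%:R^-1 => r0.
  apply: negligibleU; apply/negligibleP => //; apply: null_oc.
    by move=> c /andP[_ cq] /supp_ab /andP[ac _]; lra.
  by move=> c /andP[pc _] /supp_ab /andP[_ cb]; lra.
apply/negligibleP; first exact: measurableC.
apply: (negligibleS _ (negligible_bigcup nF)) => t /=.
move/negP; rewrite in_itv /= negb_and -!ltNge => /orP[ta|bt].
  have := exists_Snat_inv_lt_lt (a - t); rewrite subr_gt0 => /(_ ta) [n /andP[]].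
  set r := _^-1; set N := _%:R => rta taN; exists n => //; left.
  by rewrite /= in_itv /= -/r -/N; apply/andP; split; lra.
have := exists_Snat_inv_lt_lt (t - b); rewrite subr_gt0 => /(_ bt) [n /andP[]].
set r := _^-1; set N := _%:R => rtb tbN; exists n => //; right.
by rewrite /= in_itv /= -/r -/N; apply/andP; split; lra.
Qed.

End msupport.

Lemma measurable_inv (R : realType) : measurable_fun setT (@GRing.inv R).
Proof.
rewrite -(setUv [set 0]); apply/measurable_funU => //; first exact: measurableC.
split; first exact: measurable_fun_set1.
apply: open_continuous_measurable_fun; first exact/closed_openC/closed_eq.
by move=> y; rewrite inE /= => /eqP y0; exact: inv_continuous.
Qed.

Lemma Rintegral_setT_compl_null d (T : measurableType d) (R : realType)
    (mu : {measure set T -> \bar R}) (E : set T) (f : T -> R) :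
  measurable E -> mu (~` E) = 0%E -> measurable_fun setT f ->
  \int[mu]_(t in setT) f t = \int[mu]_(t in E) f t.
Proof.
move=> mE nE mf; rewrite /Rintegral -(setUv E) integral_setU //; last 3 first.
- exact: measurableC.
- by apply/measurable_EFinP; rewrite setUv.
- by rewrite disj_set2E setICr.
rewrite [X in (_ + X)%E]null_set_integral ?adde0 //; first exact: measurableC.
exact/measurable_EFinP/(measurable_funS _ _ mf).
Qed.

Section weighted_Cauchy_Schwarz.
Context d (T : measurableType d) (R : realType) (mu : {measure set T -> \bar R}).
Variables (D : set T) (u v : T -> R).
Hypotheses (mD : measurable D) (u_ge0 : forall t, D t -> 0 <= u t).
Hypotheses (iu : mu.-integrable D (EFin \o u))
  (iuv : mu.-integrable D (EFin \o (fun t => u t * v t)))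
  (iuv2 : mu.-integrable D (EFin \o (fun t => u t * v t ^+ 2))).

Lemma Rintegral_weighted_Cauchy_Schwarz : 0 < \int[mu]_(t in D) u t ->
  (\int[mu]_(t in D) (u t * v t)) ^+ 2 <=
  \int[mu]_(t in D) u t * \int[mu]_(t in D) (u t * v t ^+ 2).
Proof.
set w := \int[mu]_(t in D) u t; set c := \int[mu]_(t in D) (u t * v t) => w0.
have iZ k f : mu.-integrable D (EFin \o f) ->
    mu.-integrable D (EFin \o (fun t => k * f t)).
  move=> iF; apply: (eq_integrable mD _ _ _ (integrableZl mD k iF)) => t _ /=.
  by rewrite EFinM.
pose q t := w ^+ 2 * (u t * v t ^+ 2) - 2 * w * c * (u t * v t) + c ^+ 2 * u t.
have : 0 <= \int[mu]_(t in D) q t.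
  apply: Rintegral_ge0 => t Dt.
  have -> : q t = u t * (w * v t - c) ^+ 2 by rewrite /q; ring.
  by rewrite mulr_ge0 ?sqr_ge0 ?u_ge0.
rewrite RintegralD ?RintegralB ?RintegralZl //; try exact: iZ.
  by rewrite -/w -/c; nra.
exact: (integrableB mD (iZ _ _ iuv2) (iZ _ _ iuv)).
Qed.

End weighted_Cauchy_Schwarz.

Lemma is_derive_inv_subr (R : realType) (t x : R) (n : nat) : x != t ->
  is_derive x 1 (fun y => (y - t)^-1 ^+ n) (- n%:R * (x - t)^-1 ^+ n.+1).
Proof.
move=> xt; have xt0 : x - t != 0 by rewrite subr_eq0.
have dsub : is_derive x 1 (fun y : R => y - t) 1.
  by apply: is_derive_eq; rewrite subr0.
have dinv := @is_deriveV _ (fun y => y - t) _ _ _ xt0 dsub.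
rewrite -exprfctE; apply: (is_derive_eq (is_deriveX n dinv)).
rewrite /GRing.scale /= mulr1 -exprVn.
by case: n => [|n]; rewrite ?mul0r ?mulr0n ?oppr0 ?mul0r // mulrN -mulrA -exprD addn2 mulNr.
Qed.

(* Integrating over [a, b] instead of R loses nothing once mu is concentrated
   on [a, b] (see Rintegral_setT_compl_null), and keeps the kernels bounded. *)
Definition cauchy_moment {R : realType} (mu : {measure set R -> \bar R})
    (a b : R) (n : nat) (x : R) : R :=
  \int[mu]_(t in `[a, b]%classic) (x - t)^-1 ^+ n.

Section cauchy_moment.
Context (R : realType) (mu : {measure set R -> \bar R}) (a b : R).
Hypothesis mu_ab : mu `[a, b]%classic = 1%E.
Local Notation E := `[a, b]%classic.
Local Notation m := (cauchy_moment mu a b).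

Let mE : measurable E. Proof. exact: measurable_itv. Qed.

Lemma cauchy_kernel_bounds x t : b < x -> t \in `[a, b] ->
  [/\ 0 < (x - t)^-1, (x - a)^-1 <= (x - t)^-1 & (x - t)^-1 <= (x - b)^-1].
Proof.
move=> bx; rewrite in_itv /= => /andP[ta tb].
have xt : 0 < x - t by rewrite subr_gt0 (le_lt_trans tb).
rewrite invr_gt0 xt !lef_pV2 ?posrE ?subr_gt0 ?(le_lt_trans ta) ?(le_lt_trans tb) //.
by rewrite !lerD2l !lerN2 ta tb.
Qed.

Lemma measurable_cauchy_kernel x n :
  measurable_fun setT (fun t : R => (x - t)^-1 ^+ n).
Proof.
apply/measurable_funX/(measurableT_comp (measurable_inv R)).
exact: measurable_funB.
Qed.

Let integrable_bounded (f : R -> R) (C : R) : measurable_fun E f ->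
  (forall t, t \in `[a, b] -> `|f t| <= C) -> mu.-integrable E (EFin \o f).
Proof.
move=> mf fC; apply: measurable_bounded_integrable => //; first by rewrite mu_ab ltry.
exists C; split; first exact: num_real.
by move=> C' CC' t /fC fC'; exact: le_trans fC' (ltW CC').
Qed.

Lemma integrable_cauchy_kernel x n : b < x ->
  mu.-integrable E (EFin \o (fun t => (x - t)^-1 ^+ n)).
Proof.
move=> bx; apply: (integrable_bounded _ ((x - b)^-1 ^+ n)).
  exact: measurable_funS (measurable_cauchy_kernel x n).
move=> t /(cauchy_kernel_bounds _ _ bx) [xt0 _ xtb].
rewrite normrX ger0_norm ?exprn_ge0 ?(ltW xt0) // lerXn2r ?nnegrE ?(ltW xt0) //.
exact: le_trans (ltW xt0) xtb.
Qed.

Lemma is_derive_cauchy_moment n x : b < x ->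
  is_derive x 1 (m n) (- n%:R * m n.+1 x).
Proof.
(* On ]u, x + 1[ the partial derivatives are dominated by n (u - b)^-(n+1). *)
move=> bx; pose u := (b + x) / 2; pose f (y t : R) := (y - t)^-1 ^+ n.
have [bu ux] : b < u /\ u < x by rewrite /u; split; lra.
have Ix : `]u, x + 1[%classic x by rewrite /= in_itv /= ux /=; lra.
have bI y : `]u, x + 1[%classic y -> b < y.
  by rewrite /= in_itv /= => /andP[uy _]; exact: lt_trans uy.
have d1f y t : b < y -> t \in `[a, b] ->
    is_derive y 1 (f ^~ t) (- n%:R * (y - t)^-1 ^+ n.+1).
  move=> by'; rewrite in_itv /= => /andP[_ tb].
  by apply: is_derive_inv_subr; rewrite gt_eqF // (le_lt_trans tb).
have d1fE y t : b < y -> t \in `[a, b] ->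
    partial1of2 f y t = - n%:R * (y - t)^-1 ^+ n.+1.
  by move=> by' tab; rewrite partial1of2E; have [_ ->] := d1f _ _ by' tab.
have intf y : `]u, x + 1[%classic y -> mu.-integrable E (EFin \o f y).
  by move/bI; exact: integrable_cauchy_kernel.
have derf1 y t : `]u, x + 1[%classic y -> E t -> derivable (f ^~ t) y 1.
  by move=> /bI by' tab; have [] := d1f _ _ by' tab.
pose G (t : R) := n%:R * (u - b)^-1 ^+ n.+1.
have G_ub y t : `]u, x + 1[%classic y -> E t -> `|partial1of2 f y t| <= G t.
  move=> Iy tab; have by' := bI _ Iy.
  have [/ltW yt0 _ ytb] := cauchy_kernel_bounds _ _ by' tab.
  have uy : u < y by move: Iy; rewrite /= in_itv /= => /andP[].
  rewrite d1fE // normrM normrN normr_nat ler_wpM2l // normrX ger0_norm //.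
  rewrite lerXn2r ?nnegrE // ?invr_ge0 ?subr_ge0 ?(ltW bu) //.
  by apply: le_trans ytb _; rewrite lef_pV2 ?posrE ?subr_gt0 // lerD2r ltW.
have G_ge0 t : 0 <= G t.
  by rewrite /G mulr_ge0 ?ler0n ?exprn_ge0 // invr_ge0 subr_ge0 ltW.
have intG : mu.-integrable E (EFin \o G).
  apply: (integrable_bounded _ (G 0)); first exact: measurable_cst.
  by move=> s _; rewrite ger0_norm.
apply: DeriveDef; first exact: derivable_under_integral G_ge0 intG G_ub.
rewrite -derive1E (differentiation_under_integral mE Ix intf derf1 G_ge0 intG G_ub).
rewrite -RintegralZl //; last exact: integrable_cauchy_kernel.
by apply: eq_Rintegral => t /[!inE] tab; rewrite d1fE.
Qed.

Lemma cauchy_moment_gt0 n x : b < x -> 0 < m n x.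
Proof.
move=> bx; have ab : a <= b.
  rewrite leNgt; apply/negP => ba; move: mu_ab.
  rewrite set_itv_ge ?measure0; last by rewrite bnd_simp -ltNge.
  by move=> [] /eqP; rewrite eq_sym oner_eq0.
have xa0 : 0 < (x - a)^-1 by rewrite invr_gt0 subr_gt0 (le_lt_trans ab).
apply: (@lt_le_trans _ _ (\int[mu]_(t in E) (x - a)^-1 ^+ n)).
  by rewrite Rintegral_cst // mu_ab mulr1 exprn_gt0.
apply: le_Rintegral => //.
- apply: (integrable_bounded _ ((x - a)^-1 ^+ n)); first exact: measurable_cst.
  by move=> ? _; rewrite ger0_norm // exprn_ge0 // ltW.
- exact: integrable_cauchy_kernel.
- move=> t /(cauchy_kernel_bounds _ _ bx) [xt0 xta _].
  by rewrite lerXn2r // nnegrE ltW.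
Qed.

Lemma cauchy_moment_log_convex n x : b < x ->
  m n.+1 x ^+ 2 <= m n x * m n.+2 x.
Proof.
move=> bx; pose k t := (x - t)^-1.
have kD j t : k t ^+ (n + j) = k t ^+ n * k t ^+ j by rewrite exprD.
have iD j : mu.-integrable E (EFin \o (fun t => k t ^+ n * k t ^+ j)).
  apply: (eq_integrable mE _ _ _ (integrable_cauchy_kernel _ (n + j) bx)).
  by move=> t _ /=; rewrite kD.
have -> : m n.+1 x = \int[mu]_(t in E) (k t ^+ n * k t).
  by apply: eq_Rintegral => t _; rewrite -addn1 kD.
have -> : m n.+2 x = \int[mu]_(t in E) (k t ^+ n * k t ^+ 2).
  by apply: eq_Rintegral => t _; rewrite -addn2 kD.
apply: Rintegral_weighted_Cauchy_Schwarz => //.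
- by move=> t /(cauchy_kernel_bounds _ _ bx) [/ltW k0 _ _]; exact: exprn_ge0.
- exact: integrable_cauchy_kernel.
- exact: (iD 1).
- exact: cauchy_moment_gt0.
Qed.

Lemma cauchy_moment0 x : m 0 x = 1.
Proof. by rewrite /cauchy_moment Rintegral_cst // mu_ab mulr1. Qed.

Lemma derive1_cauchy_moment n x : b < x -> derive1 (m n) x = - n%:R * m n.+1 x.
Proof. by move=> bx; rewrite derive1E; have [_ ->] := is_derive_cauchy_moment n _ bx.
Qed.

Let phi x := m 1 x ^+ 2 / derive1 (m 1) x.

Let phiE x : b < x -> phi x = - (m 1 x ^+ 2 / m 2 x).
Proof. by move=> bx; rewrite /phi derive1_cauchy_moment // mulN1r invrN mulrN. Qed.

Lemma is_derive_cauchy_ratio x : b < x ->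
  is_derive x 1 phi (2 * m 1 x * (m 2 x ^+ 2 - m 1 x * m 3 x) / m 2 x ^+ 2).
Proof.
move=> bx; have m2x : m 2 x != 0 by rewrite gt_eqF // cauchy_moment_gt0.
have dm1 := is_derive_cauchy_moment 1 _ bx.
have dm2 := is_derive_cauchy_moment 2 _ bx.
have dpsi := is_deriveN (is_deriveM (is_deriveX 2 dm1) (is_deriveV m2x dm2)).
apply: near_eq_is_derive (is_derive_eq dpsi _).
  near=> y; rewrite phiE //; near: y; exact: lt_nbhsr.
by rewrite !fctE /GRing.scale /=; field.
Unshelve. all: end_near.
Qed.

Lemma cauchy_ratio_bounds x : b < x -> -1 <= phi x <= 0.
Proof.
move=> bx; rewrite phiE // lerNr opprK oppr_le0.
have m2x := cauchy_moment_gt0 2 _ bx.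
have := cauchy_moment_log_convex 0 _ bx; rewrite cauchy_moment0 mul1r => m12.
by rewrite ler_pdivrMr // mul1r m12 divr_ge0 ?sqr_ge0 // ltW.
Qed.

Lemma continuous_cauchy_ratio : {within [set x | b < x], continuous phi}.
Proof.
rewrite continuous_open_subspace; last exact: open_gt.
move=> x /[!inE] bx; apply/differentiable_continuous/derivable1_diffP.
by have [] := is_derive_cauchy_ratio _ bx.
Qed.

Lemma cauchy_ratio_nonincreasing :
  {in [set x | b < x] &, {homo phi : x y / x <= y >-> y <= x}}.
Proof.
move=> x y /[!inE] /= bx by' xy.
have bz z : z \in `[x, y] -> b < z.
  by rewrite in_itv /= => /andP[xz _]; exact: lt_le_trans xz.
apply: (@ler0_derive1_le_cc _ phi x y) => //; last 2 first.
- by rewrite in_itv /= lexx xy.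
- by rewrite in_itv /= lexx xy.
- by move=> z /subset_itv_oo_cc /bz bz'; have [] := is_derive_cauchy_ratio _ bz'.
- move=> z /subset_itv_oo_cc /bz bz'.
  rewrite derive1E; have [_ ->] := is_derive_cauchy_ratio _ bz'.
  have m1z := cauchy_moment_gt0 1 _ bz'.
  have m12 := cauchy_moment_log_convex 1 _ bz'.
  apply: mulr_le0_ge0; last by rewrite invr_ge0 sqr_ge0.
  by apply: mulr_ge0_le0; rewrite ?subr_le0 // mulr_ge0 // ltW.
- apply: continuous_subspaceW continuous_cauchy_ratio.
  by move=> z /= /bz.
Qed.

End cauchy_moment.

Theorem mainTheorem5 (R : realType) (mu : probability R R)
  (hbdd : exists M : R, forall t, msupport mu t -> `|t| <= M) :
  let b := sup (msupport mu) in
  let G := cauchy_transform mu in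
  let Phi := fun x : R => (G x) ^+ 2 / derive1 G x in
  [/\ {within [set x | b < x], continuous Phi},
      {in [set x | b < x] &, {homo Phi : x y / x <= y >-> y <= x}}
    & forall x, b < x -> -1 <= Phi x <= 0].
Proof.
move=> b G Phi; have [M hM] := hbdd.
have supp_Mb c : msupport mu c -> -M <= c <= b.
  move=> muc; have /andP[-> _] : -M <= c <= M by rewrite -ler_norml hM.
  by apply: ub_le_sup muc; exists M => t /hM /(le_trans (ler_norm t)).
have null_compl := msupport_null_compl_itv _ _ _ _ supp_Mb.
have mu_Mb : mu `[-M, b]%classic = 1%E.
  rewrite -(probability_setT mu) -(setUv `[-M, b]%classic) measureU //.
  - by rewrite [X in (_ + X)%E](_ : _ = 0%E) ?adde0.
  - exact: measurableC.
  - by rewrite setICr.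
rewrite {}/Phi; have -> : G = cauchy_moment mu (-M) b 1.
  apply/funext => x; apply: Rintegral_setT_compl_null => //.
  exact: measurable_cauchy_kernel x 1.
by split; [exact: continuous_cauchy_ratio | exact: cauchy_ratio_nonincreasing
  | exact: cauchy_ratio_bounds].
Qed.
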